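(* Let $\mathfrak g=\mathfrak k\oplus\mathfrak m$ be a Pauli-spanned Cartan decomposition, and let $b_1\neq b_2$ be two commuting Pauli strings in $\tilde{\mathfrak m}$ lying in the same connected component of the frustration graph of $\mathfrak g$. Then $|\tilde{\mathfrak k}^1|=|\tilde{\mathfrak k}^2|$.
   Context: Pauli strings on $n$ qubits are tensor products of $I,X,Y,Z$, not all identity; two Pauli strings either commute or anticommute. A Pauli-spanned Cartan decomposition is $\mathfrak g=\mathfrak k\oplus\mathfrak m\subseteq\mathfrak{su}(2^n)$ with $\mathfrak k=\mathrm{span}_{i\mathbb R}\tilde{\mathfrak k}$, $\mathfrak m=\mathrm{span}_{i\mathbb R}\tilde{\mathfrak m}$, $\mathfrak g=\mathrm{span}_{i\mathbb R}\tilde{\mathfrak g}$ with $\tilde{\mathfrak g}=\tilde{\mathfrak k}\sqcup\tilde{\mathfrak m}$ the set of all Pauli strings (up to phase) $\sigma$ with $i\sigma\in\mathfrak g$, and $[\mathfrak k,\mathfrak k]\subseteq\mathfrak k$, $[\mathfrak m,\mathfrak m]\subseteq\mathfrak k$, $[\mathfrak k,\mathfrak m]\subseteq\mathfrak m$. The frustration graph of $\mathfrak g$ has vertex set $\tilde{\mathfrak g}$, with edges between anticommuting pairs. For Pauli strings $b_1,b_2,\dots$ and disjoint index lists, $\tilde{\mathfrak k}^{i_1i_2\dots}_{j_1j_2\dots}$ is the set of $k\in\tilde{\mathfrak k}$ anticommuting with every $b_{i_p}$ and commuting with every $b_{j_q}$ (no condition on other indices); in particular $\tilde{\mathfrak k}^i$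 is the set of elements of $\tilde{\mathfrak k}$ anticommuting with $b_i$. *)

From mathcomp Require Import all_boot.
Set Implicit Arguments. Unset Strict Implicit. Unset Printing Implicit Defensive.

(* Pauli strings on n qubits, up to phase, in the symplectic (x,z) encoding:
   each qubit carries a pair (x,z) : bool * bool with
   I = (false,false), X = (true,false), Z = (false,true), Y = (true,true). *)
Definition pstring (n : nat) := {ffun 'I_n -> bool * bool}.

Definition pid (n : nat) : pstring n := [ffun _ => (false, false)].

(* single-qubit Paulis anticommute iff both non-identity and different *)
Definition anticomm1 (a b : bool * bool) : bool := (a.1 && b.2) (+) (a.2 && b.1).

Definition anticommute n (p q : pstring n) : bool :=
  odd #|[set i | anticomm1 (p i) (q i)]|.

Definition pmul n (p q : pstring n) : pstring n :=
  [ffun i => ((p i).1 (+) (q i).1, (p i).2 (+) (q i).2)].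

(* Pauli-spanned Cartan decomposition g = k (+) m, given by the sets
   Ktil, Mtil of Pauli strings spanning k and m.  Since Pauli strings are
   linearly independent and [i s, i t] = 0 if s,t commute and is a nonzero
   multiple of i (s t) (a Pauli string up to phase) if they anticommute,
   the span inclusions [k,k] <= k, [m,m] <= k, [k,m] <= m are equivalent to
   the closure conditions below. *)
Definition pauli_cartan n (Ktil Mtil : {set pstring n}) : Prop :=
  [/\ pid n \notin Ktil, pid n \notin Mtil & [disjoint Ktil & Mtil]] /\
  [/\ {in Ktil &, forall a b, anticommute a b -> pmul a b \in Ktil},
      {in Mtil &, forall a b, anticommute a b -> pmul a b \in Ktil} &
      {in Ktil & Mtil, forall a b, anticommute a b -> pmul a b \in Mtil}].

Definition frustration n (Ktil Mtil : {set pstring n}) : rel (pstring n) :=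
  fun a b => [&& a \in Ktil :|: Mtil, b \in Ktil :|: Mtil & anticommute a b].

Definition ksup n (Ktil : {set pstring n}) (b : pstring n) : {set pstring n} :=
  [set k in Ktil | anticommute k b].

From mathcomp Require Import all_boot.
Set Implicit Arguments. Unset Strict Implicit. Unset Printing Implicit Defensive.

(* For [a] in [g], the transvection [x |-> a x] (if [x] anticommutes with [a],
   else [x]) is an involution of [g] preserving commutation, because [g] is
   closed under products of anticommuting strings.  When [c], [d] are adjacent
   in the frustration graph, the transvection by [c d] swaps [c] and [d], so
   the degree [|g^c|] is constant on connected components.  For [b] in [m] the
   neighbours of [b] are [k^b] and [m^b], and multiplication by [b] maps each
   onto the other, so [|g^b| = 2 |k^b|]. *)

Section PauliAlgebra.
Variable n : nat.
Implicit Types p q r a c d x y : pstring n.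

Lemma anticommute_sum p q :
  anticommute p q = \big[addb/false]_i anticomm1 (p i) (q i).
Proof.
rewrite /anticommute -sum1_card big_mkcond /=.
apply: (big_rec2 (fun m b => odd m = b)) => //= i m b _ <-.
by rewrite inE oddD; case: (anticomm1 _ _).
Qed.

Lemma anticommuteC p q : anticommute p q = anticommute q p.
Proof.
rewrite !anticommute_sum; apply: eq_bigr => i _.
by case: (p i) (q i) => [[] []] [[] []].
Qed.

Lemma anticommutexx p : anticommute p p = false.
Proof. by rewrite anticommute_sum big1 // => i _; case: (p i) => [[] []]. Qed.

Lemma anticommuteMl p q r :
  anticommute (pmul p q) r = anticommute p r (+) anticommute q r.
Proof.
rewrite !anticommute_sum -big_split /=; apply: eq_bigr => i _.
by rewrite ffunE; case: (p i) (q i) (r i) => [[] []] [[] []] [[] []].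
Qed.

Lemma anticommuteMr p q r :
  anticommute r (pmul p q) = anticommute r p (+) anticommute r q.
Proof. by rewrite anticommuteC anticommuteMl !(anticommuteC r). Qed.

Lemma pmulC p q : pmul p q = pmul q p.
Proof.
by apply/ffunP => i; rewrite !ffunE; case: (p i) (q i) => [[] []] [[] []].
Qed.

Lemma pmulK p : cancel (pmul p) (pmul p).
Proof.
by move=> q; apply/ffunP => i; rewrite !ffunE; case: (p i) (q i) => [[] []] [[] []].
Qed.

Definition transvection a x := if anticommute a x then pmul a x else x.

Lemma transvectionK a : involutive (transvection a).
Proof.
move=> x; rewrite {2}/transvection; case: ifPn => ax; rewrite /transvection.
  by rewrite anticommuteMr anticommutexx ax pmulK.
by rewrite (negbTE ax).
Qed.

Lemma anticommute_transvection a x y :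
  anticommute (transvection a x) (transvection a y) = anticommute x y.
Proof.
rewrite /transvection; case: ifP => ax; case: ifP => ay;
  rewrite ?anticommuteMl ?anticommuteMr ?anticommutexx
          ?(anticommuteC y a) ?(anticommuteC x a) ?(anticommuteC y x) ?ax ?ay //=;
  by case: (anticommute x y).
Qed.

Lemma transvection_pmul c d :
  anticommute c d -> transvection (pmul c d) c = d.
Proof.
move=> cd; rewrite /transvection anticommuteMl anticommutexx anticommuteC cd.
by rewrite pmulC pmulK.
Qed.

End PauliAlgebra.

Definition lie_closed n (G : {set pstring n}) :=
  {in G &, forall a b, anticommute a b -> pmul a b \in G}.

Lemma ksupU n (A B : {set pstring n}) c :
  ksup (A :|: B) c = ksup A c :|: ksup B c.
Proof. by apply/setP => x; rewrite !inE andb_orl. Qed.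

Section LieClosed.
Variables (n : nat) (G : {set pstring n}).
Hypothesis closedG : lie_closed G.

Lemma transvection_in a x : a \in G -> x \in G -> transvection a x \in G.
Proof. by move=> aG xG; rewrite /transvection; case: ifP => // ax; apply: closedG. Qed.

Lemma imset_transvection_ksup a c :
  a \in G -> transvection a @: ksup G c \subset ksup G (transvection a c).
Proof.
move=> aG; apply/subsetP => _ /imsetP[x + ->]; rewrite inE => /andP[xG xc].
by rewrite inE transvection_in // anticommute_transvection.
Qed.

Lemma card_ksup_transvection a c :
  a \in G -> #|ksup G (transvection a c)| = #|ksup G c|.
Proof.
move=> aG; have le_card c' : #|ksup G c'| <= #|ksup G (transvection a c')|.
  rewrite -(card_imset _ (can_inj (transvectionK a))).
  exact: subset_leq_card (imset_transvection_ksup c' aG).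
by apply/eqP; rewrite eqn_leq le_card -{2}(transvectionK a c) le_card.
Qed.

Lemma card_ksup_anticommute c d :
  c \in G -> d \in G -> anticommute c d -> #|ksup G c| = #|ksup G d|.
Proof.
move=> cG dG cd.
by rewrite -(card_ksup_transvection c (closedG cG dG cd)) transvection_pmul.
Qed.

End LieClosed.

Section Cartan.
Variables (n : nat) (K M : {set pstring n}).
Hypothesis cartan : pauli_cartan K M.

Lemma lie_closed_cartan : lie_closed (K :|: M).
Proof.
case: cartan => _ [KK MM KM] a b; rewrite !inE.
case/orP => aG; case/orP => bG ab.
- by rewrite KK.
- by rewrite KM ?orbT.
- by rewrite pmulC KM ?orbT // anticommuteC.
- by rewrite MM.
Qed.

Lemma card_ksup_connect c d :
  connect (frustration K M) c d ->
  #|ksup (K :|: M) c| = #|ksup (K :|: M) d|.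
Proof.
pose same_card := [pred x | #|ksup (K :|: M) x| == #|ksup (K :|: M) c|].
have: closed (frustration K M) same_card.
  move=> x y /and3P[xG yG xy].
  by rewrite !inE (card_ksup_anticommute lie_closed_cartan xG yG xy).
by move/closed_connect/[apply]; rewrite !inE eqxx => /esym/eqP.
Qed.

Lemma card_ksup_m b : b \in M -> #|ksup M b| = #|ksup K b|.
Proof.
case: cartan => _ [_ MM KM] bM.
have le_card_pmul (A B : {set pstring n}) :
    {in ksup A b, forall x, pmul b x \in B} -> #|ksup A b| <= #|ksup B b|.
  move=> AB; rewrite -(card_imset _ (can_inj (pmulK b))).
  apply: subset_leq_card; apply/subsetP => _ /imsetP[x xA ->].
  by move: xA (AB x xA); rewrite !inE anticommuteMl anticommutexx => /andP[_ ->] ->.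
apply/eqP; rewrite eqn_leq !le_card_pmul // => x; rewrite inE => /andP[xA xb].
  by rewrite pmulC KM.
by rewrite MM // anticommuteC.
Qed.

Lemma card_ksup_cartan b : b \in M -> #|ksup (K :|: M) b| = (#|ksup K b|).*2.
Proof.
case: cartan => [[_ _ disjKM] _] bM.
have disj : [disjoint ksup K b & ksup M b].
  by apply: disjointW disjKM; apply/subsetP => x; rewrite inE => /andP[].
by rewrite ksupU cardsU (disjoint_setI0 disj) cards0 subn0 card_ksup_m // addnn.
Qed.

End Cartan.

Theorem corollaryC2 (n : nat) (Ktil Mtil : {set pstring n}) (b1 b2 : pstring n) :
  pauli_cartan Ktil Mtil ->
  b1 \in Mtil -> b2 \in Mtil -> b1 != b2 ->
  ~~ anticommute b1 b2 ->
  connect (frustration Ktil Mtil) b1 b2 ->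
  #|ksup Ktil b1| = #|ksup Ktil b2|.
Proof.
move=> cartan b1M b2M _ _ conn.
apply: double_inj; rewrite -!(card_ksup_cartan cartan) //.
exact: card_ksup_connect cartan _ _ conn.
Qed.
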